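(* Let $\pi_1,\pi_2,\pi_3$ be Borel probability measures on $[0,\infty)$ such that $\mu=\pi_1\times\pi_2\times\pi_3$ satisfies $R\mu=\mu$, where $R(r,s,t)=(t+[r-s]^+,\,t+[s-r]^+,\,r\wedge s)$. Let $S$ be a finite hexagonal domain, and generate the flow field $\eta$ on $\mathbb{E}(\bar S)$ from the following independent families: - inputs on the ascending incoming edges, i.i.d. with law $\pi_1$; - inputs on the descending incoming edges, i.i.d. with law $\pi_2$; - births $(\xi_y)_{y\in S}$, i.i.d. with law $\pi_3$. Then the family of outputs $(\eta(e))$, over all outgoing edges $e$ of $S$, consists of independent random variables. Moreover $\eta(e)$ has law $\pi_1$ for every ascending outgoing edge $e$, and law $\pi_2$ for every descending outgoing edge $e$.
   Context: Lattice and edges. $\tilde{\mathbb{Z}}^2=\{(t,x)\in\mathbb{Z}^2:t+x\text{ even}\}$; edges join points at Euclidean distance $\sqrt2$. For $y=(t,x)$ write - $e^\nearrow_y=\langle(t,x),(t+1,x+1)\rangle$, - $e^\searrow_y=\langle(t,x),(t+1,x-1)\rangle$, - $e^\swarrow_y=\langle(t-1,x-1),(t,x)\rangle$, - $e^\nwarrow_y=\langle(t-1,x+1),(t,x)\rangle$. Hexagonal domain. A finite hexagonal domain is a set $S=\{(t,x)\in\tilde{\mathbb{Z}}^2: t_0\le t\le t_1,\ x_{t,-}\le x\le x_{t,+}\}$ where: - $t_0<t_1$ are integers; - $x_{t,-}\le x_{t,+}$ are integers with $t+x_{t,\pm}$ even; - for some $t^\pm_{01}\in[t_0,t_1]$ one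 has $x_{t+1,\pm}-x_{t,\pm}=\pm1$ for $t_0\le t<t^\pm_{01}$, and $x_{t+1,\pm}-x_{t,\pm}=\mp1$ for $t^\pm_{01}\le t<t_1$. Associated sets and edge types. $\bar S$ is $S$ together with all lattice points joined by an edge to a point of $S$, and $\mathbb{E}(\bar S)$ is the set of edges with an endpoint in $S$. - An incoming edge is $\langle y',y\rangle$ with $y\in S$, $y'\notin S$, $t(y')=t(y)-1$. It is ascending if it is $e^\swarrow_y$ and descending if it is $e^\nwarrow_y$. - An outgoing edge is $\langle y,y'\rangle$ with $y\in S$, $y'\notin S$, $t(y')=t(y)+1$. It is ascending if it is $e^\nearrow_y$ and descending if it is $e^\searrow_y$. Generated flow field. Defined recursively in increasing $t$: for $y\in S$, with $\zeta^+_y=\eta(e^\swarrow_y)$ and $\zeta^-_y=\eta(e^\nwarrow_y)$ (inputs or previously defined values), set $$\eta(e^\nearrow_y)=\xi_y+[\zeta^+_y-\zeta^-_y]^+,\qquad \eta(e^\searrow_y)=\xi_y+[\zeta^-_y-\zeta^+_y]^+.$$ *)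

From mathcomp Require Import all_boot all_order all_algebra.
From mathcomp Require Import all_classical all_reals all_analysis.
Set Implicit Arguments. Unset Strict Implicit. Unset Printing Implicit Defensive.
Import Order.TTheory GRing.Theory Num.Theory.
Local Open Scope ring_scope.
Local Open Scope classical_set_scope.

(** Points of Z^2 are pairs (t, x) of integers; the lattice \tilde Z^2 is the
    set of those with t + x even. *)
Definition pt := (int * int)%type.

Definition in_lattice (y : pt) : bool := (2 %| (y.1 + y.2))%Z.

(** An edge of \tilde Z^2 joins y = (t,x) to (t+1, x+1) or to (t+1, x-1).  We
    represent it by its lower (earlier-time) endpoint together with a boolean
    direction: [true] for the up-right step (t+1,x+1), [false] for the
    down-right step (t+1,x-1). *)
Definition edge := (pt * bool)%type.

Definition e_ne (y : pt) : edge := (y, true).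
Definition e_se (y : pt) : edge := (y, false).
Definition e_sw (y : pt) : edge := ((y.1 - 1, y.2 - 1), true).
Definition e_nw (y : pt) : edge := ((y.1 - 1, y.2 + 1), false).

(** Parameters: t0, t1, the boundary functions t |-> x_{t,-}, t |-> x_{t,+}
    (only their values for t0 <= t <= t1 matter) and the turning times
    t^-_{01}, t^+_{01}. *)
Record hexData := HexData {
  h_t0 : int; h_t1 : int;
  h_xm : int -> int; h_xp : int -> int;
  h_tm : int; h_tp : int }.

Definition is_hexagonal (D : hexData) : Prop :=
  let t0 := h_t0 D in let t1 := h_t1 D in
  let xm := h_xm D in let xp := h_xp D in
  [/\ t0 < t1,
      (forall t, t0 <= t <= t1 ->
         [/\ xm t <= xp t, (2 %| (t + xm t))%Z & (2 %| (t + xp t))%Z]),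
      t0 <= h_tm D <= t1 /\ t0 <= h_tp D <= t1,
      (forall t, t0 <= t < h_tp D -> xp (t + 1) - xp t = 1) /\
      (forall t, h_tp D <= t < t1 -> xp (t + 1) - xp t = -1)
    &
      (forall t, t0 <= t < h_tm D -> xm (t + 1) - xm t = -1) /\
      (forall t, h_tm D <= t < t1 -> xm (t + 1) - xm t = 1)].

Definition inS (D : hexData) (y : pt) : bool :=
  [&& h_t0 D <= y.1 <= h_t1 D, h_xm D y.1 <= y.2 <= h_xp D y.1 & in_lattice y].

Definition incoming_asc (D : hexData) (e : edge) : Prop :=
  exists y, [/\ inS D y, ~~ inS D (y.1 - 1, y.2 - 1) & e = e_sw y].
Definition incoming_desc (D : hexData) (e : edge) : Prop :=
  exists y, [/\ inS D y, ~~ inS D (y.1 - 1, y.2 + 1) & e = e_nw y].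
Definition outgoing_asc (D : hexData) (e : edge) : Prop :=
  exists y, [/\ inS D y, ~~ inS D (y.1 + 1, y.2 + 1) & e = e_ne y].
Definition outgoing_desc (D : hexData) (e : edge) : Prop :=
  exists y, [/\ inS D y, ~~ inS D (y.1 + 1, y.2 - 1) & e = e_se y].

Definition incoming D e := incoming_asc D e \/ incoming_desc D e.
Definition outgoing D e := outgoing_asc D e \/ outgoing_desc D e.

Section Flow.
Variables (R : realType) (D : hexData).
Variables (inp : edge -> R) (xi : pt -> R).

(** [flow_at n y] = (eta(e^ne_y), eta(e^se_y)), computed recursively in
    increasing time; [n] is the fuel t(y) - t0. *)
Fixpoint flow_at (n : nat) (y : pt) : R * R :=
  let ysw := (y.1 - 1, y.2 - 1) in
  let ynw := (y.1 - 1, y.2 + 1) in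
  let zp := match n with
            | 0 => inp (e_sw y)
            | n'.+1 => if inS D ysw then (flow_at n' ysw).1 else inp (e_sw y)
            end in
  let zm := match n with
            | 0 => inp (e_nw y)
            | n'.+1 => if inS D ynw then (flow_at n' ynw).2 else inp (e_nw y)
            end in
  (xi y + Num.max (zp - zm) 0, xi y + Num.max (zm - zp) 0).

(** eta on an edge whose lower endpoint y lies in S (this includes all
    outgoing edges): [n] = t(y) - t0. *)
Definition flow (e : edge) : R :=
  let v := flow_at `|e.1.1 - h_t0 D|%N e.1 in if e.2 then v.1 else v.2.

End Flow.

Definition Rmap (R : realType) (v : (R * R) * R) : (R * R) * R :=
  let r := v.1.1 in let s := v.1.2 in let t := v.2 in
  ((t + Num.max (r - s) 0, t + Num.max (s - r) 0), Num.min r s).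

Section Prob.
Context {d : measure_display} {Omega : measurableType d} {R : realType}.

Definition has_law (P : probability Omega R) (X : Omega -> R)
  (pi : probability R R) : Prop :=
  measurable_fun setT X /\
  forall B : set R, measurable B -> P (X @^-1` B) = pi B.

Definition mutually_independent {I : eqType} (P : probability Omega R)
  (Dom : set I) (X : I -> Omega -> R) : Prop :=
  (forall i, Dom i -> measurable_fun setT (X i)) /\
  forall (J : seq I) (B : I -> set R),
    uniq J -> (forall j, j \in J -> Dom j) ->
    (forall j, j \in J -> measurable (B j)) ->
    P [set w | forall j, j \in J -> B j (X j w)] =
      (\prod_(j <- J) P (X j @^-1` B j))%E.

End Prob.

From HB Require Import structures.
From mathcomp Require Import all_boot all_order all_algebra.
From mathcomp Require Import all_classical all_reals all_analysis.
From mathcomp Require Import measurable_realfun zify.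
Import Order.TTheory GRing.Theory Num.Theory.
Local Open Scope ring_scope.
Local Open Scope classical_set_scope.

(* Sweep the sites of S in lexicographic order of (t, x).  Once a set p of sites
   has been processed, consider the values on the edges crossing the frontier of
   p (edges leaving a processed site or entering S, whose upper end is not yet
   processed) together with the births at the unprocessed sites.  Invariant: they
   are independent, with law pi1 on ascending edges, pi2 on descending edges and
   pi3 on births.  Processing a site y removes eta(e_sw y), eta(e_nw y) and xi_y
   from the family and adds eta(e_ne y), eta(e_se y), the first two coordinates
   of R applied to the removed triple.  That triple is independent of the rest
   of the family with law pi1 x pi2 x pi3, which R preserves, so the invariant
   persists.  When all of S is processed, the frontier edges are exactly the
   outgoing edges. *)

Section pair_law_on_event.
Local Open Scope ereal_scope.
Context {d} {Omega : measurableType d} {R : realType} {P : probability Omega R}.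
Context {d1 d2} {T1 : measurableType d1} {T2 : measurableType d2}.
Context {m1 : {measure set T1 -> \bar R}} {m2 : {sigma_finite_measure set T2 -> \bar R}}.
Context {U : Omega -> T1} {W : Omega -> T2} {F : set Omega}.
Hypotheses (mU : measurable_fun setT U) (mW : measurable_fun setT W) (mF : measurable F).
Hypothesis rect_law : forall X Y, measurable X -> measurable Y ->
  P (U @^-1` X `&` W @^-1` Y `&` F) = m1 X * m2 Y * P F.

Let UW w := (U w, W w).

Let mUW : measurable_fun setT UW. Proof. exact: measurable_fun_pair. Qed.

Let nu A := P (UW @^-1` A `&` F).

Let nu0 : nu set0 = 0.
Proof. by rewrite /nu preimage_set0 set0I measure0. Qed.

Let nu_ge0 A : 0 <= nu A.
Proof. exact: measure_ge0. Qed.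

Let nu_sigma_additive : semi_sigma_additive nu.
Proof.
move=> G mG tG mUG; rewrite /nu preimage_bigcup setI_bigcupl.
apply: measure_semi_sigma_additive.
- by move=> n; apply: measurableI => //; rewrite -[X in measurable X]setTI; exact: mUW.
- apply/trivIsetP => /= i j _ _ ij; rewrite setIACA -preimage_setI.
  by move/trivIsetP : tG => /(_ _ _ _ _ ij) ->//; rewrite preimage_set0 set0I.
- rewrite -setI_bigcupl -preimage_bigcup; apply: measurableI => //.
  by rewrite -[X in measurable X]setTI; exact: mUW.
Qed.

HB.instance Definition _ := isMeasure.Build _ _ _ nu nu0 nu_ge0 nu_sigma_additive.

Lemma pair_law_on_event A : measurable A ->
  P ((fun w => (U w, W w)) @^-1` A `&` F) = (m1 \x m2) A * P F.
Proof.
move=> mA; pose c : {nonneg R}%R := NngNum (fine_ge0 (measure_ge0 P F)).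
have -> : (m1 \x m2) A * P F = mscale c (m1 \x m2) A.
  by rewrite /mscale /= fineK ?fin_num_measure // muleC.
rewrite -/(nu A).
(* Both sides are finite measures of A that agree on the pi-system of rectangles. *)
apply: (measure_unique [set A1 `*` A2 | A1 in measurable & A2 in measurable] (fun=> setT)) => //.
- exact: measurable_prod_measurableType.
- move=> _ _ [X1 mX1 [X2 mX2 <-]] [Y1 mY1 [Y2 mY2 <-]].
  rewrite -setXI; exists (X1 `&` Y1); first exact: measurableI.
  by exists (X2 `&` Y2) => //; exact: measurableI.
- by move=> _; exists setT => //; exists setT => //; rewrite setXTT.
- by rewrite bigcup_const.
- move=> _ [X mX [Y mY <-]].
  change (nu (X `*` Y) = (c%:num)%:E * (m1 \x m2) (X `*` Y)).
  by rewrite /nu /= fineK ?fin_num_measure // product_measure1E // muleC -rect_law.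
- move=> _; change (nu setT < +oo); apply: (le_lt_trans (probability_le1 P _)); last exact: ltey.
  by apply: measurableI => //; rewrite -[X in measurable X]setTI; exact: mUW.
Qed.

End pair_law_on_event.

Section cylinders.
Context {d} {Omega : measurableType d} {R : realType} {I : eqType}.
Variable Z : I -> Omega -> R.

Definition cylinder (J : seq I) (B : I -> set R) : set Omega :=
  [set w | forall j, j \in J -> B j (Z j w)].

Lemma cylinder_nil B : cylinder [::] B = setT.
Proof. by apply/seteqP; split => w // _ j. Qed.

Lemma cylinder_cons j J B : cylinder (j :: J) B = Z j @^-1` B j `&` cylinder J B.
Proof.
apply/seteqP; split => w /=.
  by move=> H; split=> [|k kJ]; apply: H; rewrite inE ?eqxx ?kJ ?orbT.
by move=> [Hj HJ] k; rewrite inE => /orP[/eqP->//|]; exact: HJ.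
Qed.

Lemma eq_cylinder {J B B'} : (forall j, j \in J -> B j = B' j) ->
  cylinder J B = cylinder J B'.
Proof.
by move=> BB'; apply/seteqP; split => w /= H j jJ; [rewrite -BB'|rewrite BB'] => //; exact: H.
Qed.

Lemma measurable_cylinder J B : (forall j, j \in J -> measurable_fun setT (Z j)) ->
  (forall j, j \in J -> measurable (B j)) -> measurable (cylinder J B).
Proof.
elim: J => [|j J IH] mZ mB; first by rewrite cylinder_nil.
rewrite cylinder_cons; apply: measurableI.
  by rewrite -[X in measurable X]setTI; apply: mZ; rewrite ?mem_head //; apply: mB; rewrite mem_head.
by apply: IH => k kJ; [apply: mZ|apply: mB]; rewrite inE kJ orbT.
Qed.

End cylinders.

Section independence.
Local Open Scope ereal_scope.
Context {d} {Omega : measurableType d} {R : realType} {P : probability Omega R}.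

Lemma mutually_independent_sub {I : eqType} {Dom1 Dom2 : set I} {X Y : I -> Omega -> R} :
  mutually_independent P Dom1 X -> Dom2 `<=` Dom1 ->
  (forall i, Dom2 i -> X i = Y i) -> mutually_independent P Dom2 Y.
Proof.
move=> [mX prodX] D21 XY; split=> [i Di|J B uJ DJ mB]; first by rewrite -XY //; exact/mX/D21.
have -> : [set w | forall j, j \in J -> B j (Y j w)] = cylinder X J B.
  by apply/seteqP; split => w /= H j jJ; have := H j jJ; rewrite XY //; exact: DJ.
rewrite prodX //; last by move=> j /DJ /D21.
by apply: eq_big_seq => j jJ; rewrite XY //; exact: DJ.
Qed.

Lemma mutually_independent_comp {I J : eqType} {f : J -> I} {Dom : set I} {Dom' : set J}
    {X : I -> Omega -> R} :
  injective f -> mutually_independent P Dom X -> Dom' `<=` f @^-1` Dom ->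
  mutually_independent P Dom' (fun j => X (f j)).
Proof.
move=> finj [mX prodX] D'D; split=> [j /D'D /mX //|Js B uJs DJs mB].
pose B' i : set R := fun r => exists2 j, f j = i & B j r.
have B'f j : B' (f j) = B j.
  by apply/seteqP; split => r /=; [move=> [j' /finj -> //]|exists j].
have -> : [set w | forall j, j \in Js -> B j (X (f j) w)] = cylinder X (map f Js) B'.
  apply/seteqP; split => w /= H.
    by move=> i /mapP [j jJ ->]; rewrite B'f; exact: H.
  by move=> j jJ; rewrite -B'f; apply: H; exact: map_f.
rewrite prodX ?big_map ?map_inj_uniq //.
- by apply: eq_bigr => j _; rewrite B'f.
- by move=> i /mapP [j jJ ->]; exact/D'D/DJs.
- by move=> i /mapP [j jJ ->]; rewrite B'f; exact: mB.
Qed.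

End independence.

Lemma big_uniq_split1 {T : Type} {idx : T} {op : Monoid.com_law idx} {I : eqType}
    (J : seq I) (F : I -> T) x : uniq J ->
  \big[op/idx]_(j <- J) F j = op (if x \in J then F x else idx) (\big[op/idx]_(j <- J | j != x) F j).
Proof.
move=> uJ; case: ifPn => xJ; first exact: bigD1_seq.
rewrite Monoid.mul1m -[in RHS]big_filter; congr bigop.
apply/esym/all_filterP/allP => j jJ.
by apply: contraNneq xJ => <-.
Qed.

Section extend_pair.
Local Open Scope ereal_scope.
Context {d} {Omega : measurableType d} {R : realType} {P : probability Omega R}.
Context {I : eqType} {Dom : set I} {Z : I -> Omega -> R} {law : I -> probability R R}.
Context {a b : I}.
Hypotheses (indep : mutually_independent P Dom Z)
  (hlaw : forall i, Dom i -> has_law P (Z i) (law i)).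
Hypotheses (ab : a != b) (mZa : measurable_fun setT (Z a)) (mZb : measurable_fun setT (Z b)).
Hypothesis pair_cylinder : forall J B Ba Bb, uniq J -> (forall j, j \in J -> Dom j) ->
  (forall j, j \in J -> measurable (B j)) -> measurable Ba -> measurable Bb ->
  P ([set w | Ba (Z a w) /\ Bb (Z b w)] `&` cylinder Z J B) =
    law a Ba * law b Bb * P (cylinder Z J B).

Let law_a : has_law P (Z a) (law a).
Proof.
split=> // B mB; have := pair_cylinder [::] (fun=> setT) B setT isT ltac:(by []) ltac:(by []) mB measurableT.
rewrite cylinder_nil setIT !probability_setT !mule1 => <-.
by congr (P _); apply/seteqP; split => w /=; tauto.
Qed.

Let law_b : has_law P (Z b) (law b).
Proof.
split=> // B mB; have := pair_cylinder [::] (fun=> setT) setT B isT ltac:(by []) ltac:(by []) measurableT mB.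
rewrite cylinder_nil setIT !probability_setT mul1e mule1 => <-.
by congr (P _); apply/seteqP; split => w /=; tauto.
Qed.

Let Dom' i := Dom i \/ i = a \/ i = b.

Let law_Dom' i : Dom' i -> has_law P (Z i) (law i).
Proof. by move=> [/hlaw|[->|->]]. Qed.

Lemma mutually_independent_extend_pair :
  mutually_independent P Dom' Z /\ forall i, Dom' i -> has_law P (Z i) (law i).
Proof.
split=> //; split=> [i /law_Dom' [] //|J B uJ DJ mBJ].
pose J0 := [seq j <- [seq j <- J | j != a] | j != b].
pose Ba := if a \in J then B a else setT.
pose Bb := if b \in J then B b else setT.
have J0P j : j \in J0 = [&& j != a, j != b & j \in J].
  by rewrite !mem_filter andbCA.
have DJ0 j : j \in J0 -> Dom j.
  by rewrite J0P => /and3P[ja jb /DJ [//|[/eqP|/eqP]]]; rewrite ?(negbTE ja) ?(negbTE jb).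
have mBa : measurable Ba by rewrite /Ba; case: ifPn => // /mBJ.
have mBb : measurable Bb by rewrite /Bb; case: ifPn => // /mBJ.
have -> : [set w | forall j, j \in J -> B j (Z j w)] =
    [set w | Ba (Z a w) /\ Bb (Z b w)] `&` cylinder Z J0 B.
  apply/seteqP; split => w /=.
    move=> H; split=> [|j]; last by rewrite J0P => /and3P[_ _ /H].
    by rewrite /Ba /Bb; split; case: ifPn => // /H.
  move=> [[Ha Hb] H0] j jJ.
  have [jaE|ja] := eqVneq j a; first by subst j; move: Ha; rewrite /Ba jJ.
  have [jbE|jb] := eqVneq j b; first by subst j; move: Hb; rewrite /Bb jJ.
  by apply: H0; rewrite J0P ja jb jJ.
have mB0 j : j \in J0 -> measurable (B j) by rewrite J0P => /and3P[_ _ /mBJ].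
rewrite pair_cylinder ?filter_uniq // indep.2 ?filter_uniq //.
rewrite (big_uniq_split1 _ _ a uJ) -big_filter (big_uniq_split1 _ _ b (filter_uniq _ uJ)).
rewrite -big_filter mem_filter eq_sym ab /= /Ba /Bb.
case: ifPn => aJ; case: ifPn => bJ; rewrite /= ?probability_setT ?mul1e ?mule1.
- by rewrite (law_a.2 _ (mBJ _ aJ)) (law_b.2 _ (mBJ _ bJ)) [RHS]muleA.
- by rewrite (law_a.2 _ (mBJ _ aJ)).
- by rewrite (law_b.2 _ (mBJ _ bJ)).
- by [].
Qed.
End extend_pair.

Section triple_law.
Local Open Scope ereal_scope.
Context {d} {Omega : measurableType d} {R : realType} {P : probability Omega R}.
Context {I : eqType} {Dom : set I} {Z : I -> Omega -> R} {law : I -> probability R R}.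
Context {a b c : I}.
Hypotheses (indep : mutually_independent P Dom Z)
  (hlaw : forall i, Dom i -> has_law P (Z i) (law i)).
Hypotheses (Da : Dom a) (Db : Dom b) (Dc : Dom c) (ab : a != b) (ac : a != c) (bc : b != c).
Context {J : seq I} {B : I -> set R}.
Hypotheses (uJ : uniq J) (DJ : forall j, j \in J -> Dom j /\ [/\ j != a, j != b & j != c])
  (mB : forall j, j \in J -> measurable (B j)).

Let mZ i : Dom i -> measurable_fun setT (Z i). Proof. exact: indep.1. Qed.

Let preimage_measurable i (X : set R) : Dom i -> measurable X -> measurable (Z i @^-1` X).
Proof. by move=> Di mX; rewrite -[X in measurable X]setTI; exact: mZ. Qed.

Let E := cylinder Z J B.

Let mE : measurable E.
Proof. by apply: measurable_cylinder => // j /DJ [/mZ]. Qed.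

Let box_law X Y W : measurable X -> measurable Y -> measurable W ->
  P (Z a @^-1` X `&` Z b @^-1` Y `&` (Z c @^-1` W `&` E)) = law a X * law b Y * (law c W * P E).
Proof.
move=> mX mY mW.
pose B' j := if j == a then X else if j == b then Y else if j == c then W else B j.
have [ba ca cb] : [/\ b == a = false, c == a = false & c == b = false].
  by rewrite ![_ == a]eq_sym ![c == _]eq_sym (negbTE ab) (negbTE ac) (negbTE bc).
have notJ k : k \in J -> [/\ k != a, k != b & k != c] by case/DJ.
have B'E j : j \in J -> B' j = B j.
  by move=> /notJ [ja jb jc]; rewrite /B' (negbTE ja) (negbTE jb) (negbTE jc).
have uJ' : uniq [:: a, b, c & J].
  rewrite /= !inE !negb_or ab ac bc uJ /= andbT.
  by apply/and3P; split; apply/negP => /notJ []; rewrite eqxx.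
have <- : cylinder Z [:: a, b, c & J] B' = Z a @^-1` X `&` Z b @^-1` Y `&` (Z c @^-1` W `&` E).
  by rewrite !cylinder_cons (eq_cylinder Z B'E) /B' eqxx ba eqxx ca cb eqxx setIA.
rewrite indep.2 //; last 2 first.
- by move=> j; rewrite !inE => /or4P[/eqP->|/eqP->|/eqP->|/DJ []].
- move=> j; rewrite !inE => /or4P[/eqP->|/eqP->|/eqP->|jJ].
    1-3: by rewrite /B' ?eqxx ?ba ?ca ?cb.
  by rewrite B'E //; exact: mB.
rewrite !big_cons.
have -> : \prod_(j <- J) P (Z j @^-1` B' j) = P E.
  rewrite /E indep.2 //; last by move=> j /DJ [].
  by apply: eq_big_seq => j jJ; rewrite B'E.
rewrite /B' eqxx ba eqxx ca cb eqxx.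
by rewrite (hlaw _ Da).2 // (hlaw _ Db).2 // (hlaw _ Dc).2 // muleA.
Qed.

Lemma triple_law_on_cylinder A : measurable A ->
  P ((fun w => ((Z a w, Z b w), Z c w)) @^-1` A `&` cylinder Z J B) =
    (law a \x law b \x law c) A * P (cylinder Z J B).
Proof.
have c_law W : measurable W -> P (Z c @^-1` W `&` E) = law c W * P E.
  move=> mW; have := box_law setT setT W measurableT measurableT mW.
  by rewrite !preimage_setT !setTI !probability_setT !mul1e.
have pair_law W : measurable W -> forall X, measurable X ->
    P ((fun w => (Z a w, Z b w)) @^-1` X `&` (Z c @^-1` W `&` E)) =
      (law a \x law b) X * (law c W * P E).
  move=> mW; rewrite -c_law //; apply: pair_law_on_event; try exact: mZ.
    by apply: measurableI => //; exact: preimage_measurable.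
  by move=> X Y mX mY; rewrite c_law // box_law.
apply: pair_law_on_event => //; first by apply: measurable_fun_pair; exact: mZ.
  exact: mZ.
by move=> X W mX mW; rewrite -setIA pair_law // muleA.
Qed.

End triple_law.

Lemma measurable_Rmap (R : realType) : measurable_fun setT (@Rmap R).
Proof.
have m11 : measurable_fun setT (fun v : (R * R) * R => v.1.1).
  by apply: measurableT_comp => //; exact: measurable_fst.
have m12 : measurable_fun setT (fun v : (R * R) * R => v.1.2).
  by apply: measurableT_comp => //; exact: measurable_fst.
have m2 : measurable_fun setT (fun v : (R * R) * R => v.2) by exact: measurable_snd.
apply: measurable_fun_pair; first apply: measurable_fun_pair.
- by apply: measurable_funD => //; apply: measurable_maxr => //; exact: measurable_funB.
- by apply: measurable_funD => //; apply: measurable_maxr => //; exact: measurable_funB.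
- exact: measurable_minr.
Qed.

Section vertex_update.
Local Open Scope ereal_scope.
Context {d} {Omega : measurableType d} {R : realType} {P : probability Omega R}.
Variables pi1 pi2 pi3 : probability R R.
Hypothesis Rmap_invariant : forall A : set ((R * R) * R), measurable A ->
  (pi1 \x pi2 \x pi3) (@Rmap R @^-1` A) = (pi1 \x pi2 \x pi3) A.
Context {I : eqType} {Dom : set I} {Z : I -> Omega -> R} {law : I -> probability R R}.
Context {a b c a' b' : I}.
Hypotheses (indep : mutually_independent P Dom Z)
  (hlaw : forall i, Dom i -> has_law P (Z i) (law i)).
Hypotheses (Da : Dom a) (Db : Dom b) (Dc : Dom c) (ab : a != b) (ac : a != c) (bc : b != c).
Hypotheses (la : law a = pi1) (lb : law b = pi2) (lc : law c = pi3).
Hypotheses (a'b' : a' != b') (la' : law a' = pi1) (lb' : law b' = pi2).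
Hypothesis Z_update : forall w, (Z a' w, Z b' w) = (Rmap ((Z a w, Z b w), Z c w)).1.

Let V w := ((Z a w, Z b w), Z c w).

Let mRV1 : measurable_fun setT (fun w => (Rmap (V w)).1).
Proof.
apply: measurableT_comp; first exact: measurable_fst.
apply: measurableT_comp; first exact: measurable_Rmap.
by apply: measurable_fun_pair; first apply: measurable_fun_pair; exact: indep.1.
Qed.

Lemma vertex_update :
  let Dom' i := (Dom i /\ [/\ i != a, i != b & i != c]) \/ i = a' \/ i = b' in
  mutually_independent P Dom' Z /\ forall i, Dom' i -> has_law P (Z i) (law i).
Proof.
apply: mutually_independent_extend_pair => //.
- by apply: mutually_independent_sub indep _ _ => // i [].
- by move=> i [/hlaw].
- rewrite (_ : Z a' = fun w => (Rmap (V w)).1.1); last by apply: funext => w; rewrite /V -Z_update.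
  exact: measurableT_comp measurable_fst mRV1.
- rewrite (_ : Z b' = fun w => (Rmap (V w)).1.2); last by apply: funext => w; rewrite /V -Z_update.
  exact: measurableT_comp measurable_snd mRV1.
move=> J B Ba Bb uJ DJ mB mBa mBb.
have -> : [set w | Ba (Z a' w) /\ Bb (Z b' w)] = V @^-1` (@Rmap R @^-1` (Ba `*` Bb `*` setT)).
  apply/seteqP; split => w.
    by move=> [Ha Hb]; split => //; rewrite /V -Z_update.
  by move=> [+ _]; rewrite /V -Z_update.
have mBab : measurable (Ba `*` Bb `*` [set: R]) by apply: measurableX => //; exact: measurableX.
rewrite (triple_law_on_cylinder indep hlaw Da Db Dc ab ac bc uJ DJ mB); last first.
  by rewrite -[X in measurable X]setTI; exact: measurable_Rmap.
rewrite la lb lc Rmap_invariant // product_measure1E //; last exact: measurableX.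
transitivity (pi1 Ba * pi2 Bb * pi3 setT * P (cylinder Z J B)).
  by congr (_ * _ * _); exact: product_measure1E.
by rewrite probability_setT mule1 la' lb'.
Qed.

End vertex_update.

Lemma int_ind_up {Q : int -> Prop} {x : int} (k : nat) :
  (forall y, Q y -> Q (y + 1)) -> Q x -> Q (x + k%:Z).
Proof.
move=> step Qx; elim: k => [|k IH]; first by rewrite addr0.
by rewrite -addn1 PoszD addrA; exact: step.
Qed.

Definition edge_top (e : edge) : pt := (e.1.1 + 1, if e.2 then e.1.2 + 1 else e.1.2 - 1).

Lemma eq_e_sw (e : edge) y : (e == e_sw y) = (edge_top e == y) && e.2.
Proof.
case: e => [[t x] []]; case: y => ty xy; rewrite /edge_top /e_sw /= !xpair_eqE ?andbT ?andbF //.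
by apply/andP/andP => -[/eqP h1 /eqP h2]; split; apply/eqP; lia.
Qed.

Lemma eq_e_nw (e : edge) y : (e == e_nw y) = (edge_top e == y) && ~~ e.2.
Proof.
case: e => [[t x] []]; case: y => ty xy; rewrite /edge_top /e_nw /= !xpair_eqE ?andbT ?andbF //.
by apply/andP/andP => -[/eqP h1 /eqP h2]; split; apply/eqP; lia.
Qed.

Lemma eq_e_ne (e : edge) y : (e == e_ne y) = (e.1 == y) && e.2.
Proof. by case: e => [lo []]; rewrite /e_ne xpair_eqE ?andbT ?andbF. Qed.

Lemma eq_e_se (e : edge) y : (e == e_se y) = (e.1 == y) && ~~ e.2.
Proof. by case: e => [lo []]; rewrite /e_se xpair_eqE ?andbT ?andbF. Qed.

Lemma edge_top_e_sw y : edge_top (e_sw y) = y.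
Proof. by case: y => t x; rewrite /edge_top /= !subrK. Qed.

Lemma edge_top_e_nw y : edge_top (e_nw y) = y.
Proof. by case: y => t x; rewrite /edge_top /= subrK addrK. Qed.

Lemma edge_top_neq (e : edge) y : e.1 = y -> (edge_top e == y) = false.
Proof.
by case: e => [[t x] b] <-; rewrite /edge_top /= xpair_eqE; apply/negbTE/negP => /andP[/eqP h _]; lia.
Qed.

Section frontier.
Variable D : hexData.

Definition frontier (p : pt -> bool) (i : edge + pt) : bool :=
  match i with
  | inl e => (p e.1 || ~~ inS D e.1 && inS D (edge_top e)) && ~~ p (edge_top e)
  | inr y => inS D y && ~~ p y
  end.

Lemma incoming_of_frontier (e : edge) : ~~ inS D e.1 -> inS D (edge_top e) ->
  if e.2 then incoming_asc D e else incoming_desc D e.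
Proof.
case: e => [[t x] []] /= ns st.
  by exists (t + 1, x + 1); rewrite /= ?addrK // /e_sw /= !addrK.
by exists (t + 1, x - 1); rewrite /= ?addrK ?subrK // /e_nw /= addrK subrK.
Qed.

Lemma frontier_step (p p' : pt -> bool) y :
  (forall z, p' z = p z || (z == y)) ->
  (forall e : edge, e.1 = y -> ~~ p (edge_top e)) ->
  forall i, frontier p' i =
    (frontier p i && [&& i != inl (e_sw y), i != inl (e_nw y) & i != inr y])
    || (i == inl (e_ne y)) || (i == inl (e_se y)).
Proof.
move=> hp' hsucc [e|z] /=.
- have inlE (e1 e2 : edge) : (inl e1 == inl e2 :> edge + pt) = (e1 == e2) by [].
  rewrite !inlE eq_e_sw eq_e_nw eq_e_ne eq_e_se !hp'.
  case E1: (e.1 == y).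
    move/eqP: E1 => E1; rewrite edge_top_neq // orbT /= orbF (negbTE (hsucc _ E1)).
    by case: e.2; rewrite ?orbT.
  by case: (edge_top e == y); case: e.2; rewrite /= ?orbF ?orbT ?andbF ?andbT.
- have inrE (a b : pt) : (inr a == inr b :> edge + pt) = (a == b) by [].
  by rewrite hp' negb_or andbA /= inrE !orbF.
Qed.

Lemma flow_step (R : realType) (inp : edge -> R) (xi : pt -> R) y : inS D y ->
  let zeta (e : edge) := if inS D e.1 then flow D inp xi e else inp e in
  flow D inp xi (e_ne y) = xi y + Num.max (zeta (e_sw y) - zeta (e_nw y)) 0 /\
  flow D inp xi (e_se y) = xi y + Num.max (zeta (e_nw y) - zeta (e_sw y)) 0.
Proof.
move=> Sy zeta.
have t0y : h_t0 D <= y.1 by case/and3P: Sy => /andP[].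
rewrite /zeta /flow /=.
case En: `|y.1 - h_t0 D|%N => [|n] /=.
  have -> : inS D (y.1 - 1, y.2 - 1) = false.
    by apply/negbTE/negP => /and3P[/andP[/= h _] _ _]; lia.
  have -> : inS D (y.1 - 1, y.2 + 1) = false.
    by apply/negbTE/negP => /and3P[/andP[/= h _] _ _]; lia.
  by [].
by have -> : absz (y.1 - 1 - h_t0 D)%R = n by lia.
Qed.

Definition swept_below (T : int) (y : pt) : bool := inS D y && (y.1 < T).

Definition swept (T X : int) (y : pt) : bool :=
  inS D y && ((y.1 < T) || (y.1 == T) && (y.2 < X)).

End frontier.
Arguments incoming_of_frontier {D e}.
Arguments frontier_step {D p p' y}.
Arguments flow_step {D R inp xi y}.

Section sweep.
Context {R : realType}.
Variables pi1 pi2 pi3 : probability R R.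
Local Open Scope ereal_scope.
Hypothesis Rmap_invariant : forall A : set ((R * R) * R), measurable A ->
  (pi1 \x pi2 \x pi3) (@Rmap R @^-1` A) = (pi1 \x pi2 \x pi3) A.
Context {D : hexData} {d} {Omega : measurableType d} {P : probability Omega R}.
Context {inp : edge -> Omega -> R} {xi : pt -> Omega -> R}.

Definition stage_var (i : edge + pt) : Omega -> R :=
  match i with
  | inl e => fun w =>
      if inS D e.1 then flow D (fun e' => inp e' w) (fun y => xi y w) e else inp e w
  | inr y => xi y
  end.

Definition stage_law (i : edge + pt) : probability R R :=
  match i with inl e => if e.2 then pi1 else pi2 | inr _ => pi3 end.

Definition stage_indep (p : pt -> bool) :=
  mutually_independent P (fun i => frontier D p i) stage_var /\
  forall i, frontier D p i -> has_law P (stage_var i) (stage_law i).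

Lemma stage_indep_ext (p p' : pt -> bool) : p =1 p' -> stage_indep p -> stage_indep p'.
Proof. by move=> /funext ->. Qed.

Lemma stage_indep_step p p' y :
  (forall z, p' z = p z || (z == y)) -> inS D y -> ~~ p y ->
  (forall e : edge, edge_top e = y -> inS D e.1 -> p e.1) ->
  (forall e : edge, e.1 = y -> ~~ p (edge_top e)) ->
  stage_indep p -> stage_indep p'.
Proof.
move=> hp' Sy npy hpred hsucc [indep laws].
have in_frontier e : edge_top e = y -> frontier D p (inl e).
  move=> top_e; rewrite /= top_e npy andbT.
  by case: (boolP (inS D e.1)) => [/(hpred _ top_e) -> | _]; rewrite ?top_e ?Sy ?orbT.
have update w : (stage_var (inl (e_ne y)) w, stage_var (inl (e_se y)) w) =
    (Rmap ((stage_var (inl (e_sw y)) w, stage_var (inl (e_nw y)) w), stage_var (inr y) w)).1.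
  by rewrite /= Sy (flow_step Sy).1 (flow_step Sy).2.
have sw_nw : inl (e_sw y) != inl (e_nw y) :> edge + pt by apply/eqP; case.
have ne_se : inl (e_ne y) != inl (e_se y) :> edge + pt by apply/eqP; case.
have birth_y : frontier D p (inr y) by rewrite /= Sy npy.
have [indep' laws'] := vertex_update _ _ _ Rmap_invariant indep laws
  (in_frontier _ (edge_top_e_sw y)) (in_frontier _ (edge_top_e_nw y)) birth_y
  sw_nw isT isT erefl erefl erefl ne_se erefl erefl update.
have frontier_p' i : frontier D p' i ->
    (frontier D p i /\ [/\ i != inl (e_sw y), i != inl (e_nw y) & i != inr y]) \/
    i = inl (e_ne y) \/ i = inl (e_se y).
  rewrite (frontier_step hp' hsucc) => /orP[/orP[/andP[fi /and3P[? ? ?]]|/eqP->]|/eqP->].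
  - by left.
  - by right; left.
  - by right; right.
split; first exact: mutually_independent_sub indep' frontier_p' _.
by move=> i /frontier_p' /laws'.
Qed.

Lemma stage_indep_swept_next T X : stage_indep (swept D T X) -> stage_indep (swept D T (X + 1)).
Proof.
have [SY|nSY] := boolP (inS D (T, X)).
- apply: (@stage_indep_step _ _ (T, X)) => //.
  + move=> [zt zx]; rewrite /swept /=; case Sz: (inS D (zt, zx)) => /=.
      by rewrite xpair_eqE; lia.
    by case: eqP => // -[E1 E2]; move: Sz; rewrite E1 E2 SY.
  + by rewrite /swept negb_and /=; apply/orP; right; lia.
  + by move=> e top_e Se; rewrite /swept Se; move: top_e; rewrite /edge_top => -[h _]; lia.
  + by move=> e E1; rewrite /swept negb_and; apply/orP; right; rewrite /edge_top E1 /=; lia.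
- apply: stage_indep_ext => z; rewrite /swept; case Sz: (inS D z) => //=.
  have : z != (T, X) by apply: contraNneq nSY => <-.
  by case: z {Sz} => zt zx; rewrite /= xpair_eqE; lia.
Qed.

Lemma stage_indep_swept_below_next T :
  stage_indep (swept_below D T) -> stage_indep (swept_below D (T + 1)).
Proof.
move=> H.
have start : stage_indep (swept D T (h_xm D T)).
  apply: stage_indep_ext H => z; rewrite /swept_below /swept; case Sz: (inS D z) => //=.
  case/and3P: Sz => _ /andP[h1 h2] _.
  by have [E|ne] := eqVneq z.1 T; [rewrite E in h1 *|]; lia.
have := int_ind_up (absz (h_xp D T + 1 - h_xm D T)%R) (@stage_indep_swept_next T) start.
apply: stage_indep_ext => z; rewrite /swept_below /swept; case Sz: (inS D z) => //=.
case/and3P: Sz => _ /andP[h1 h2] _.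
by have [E|ne] := eqVneq z.1 T; [rewrite E in h2 *|]; lia.
Qed.

Lemma stage_indep_full_sweep : stage_indep (fun=> false) -> stage_indep (inS D).
Proof.
move=> H.
have start : stage_indep (swept_below D (h_t0 D)).
  apply: stage_indep_ext H => z; rewrite /swept_below; case Sz: (inS D z) => //=.
  by case/and3P: Sz => /andP[h1 h2] _ _; lia.
have := int_ind_up (absz (h_t1 D + 1 - h_t0 D)%R) stage_indep_swept_below_next start.
apply: stage_indep_ext => z; rewrite /swept_below; case Sz: (inS D z) => //=.
by case/and3P: Sz => /andP[h1 h2] _ _; lia.
Qed.

Lemma stage_indep_init
    (hasc : forall e, incoming_asc D e -> has_law P (inp e) pi1)
    (hdesc : forall e, incoming_desc D e -> has_law P (inp e) pi2)
    (hxi : forall y, inS D y -> has_law P (xi y) pi3)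
    (hindep : mutually_independent P
       (fun i : edge + pt => match i with inl e => incoming D e | inr y => inS D y end)
       (fun i => match i with inl e => inp e | inr y => xi y end)) :
  stage_indep (fun=> false).
Proof.
have input e : frontier D (fun=> false) (inl e) ->
    stage_var (inl e) = inp e /\ if e.2 then incoming_asc D e else incoming_desc D e.
  rewrite /= andbT => /andP[ns st]; split; last exact: incoming_of_frontier.
  by apply: funext => w; rewrite /= (negbTE ns).
split.
- apply: mutually_independent_sub hindep _ _ => [[e /input [_]|y /=]|[e /input [-> _]|y]] //.
  + by case: e.2; [left|right].
  + by rewrite andbT.
- move=> [e /input [-> H]|y /=]; last by rewrite andbT => /hxi.
  by rewrite /stage_law; case: e.2 H; [exact: hasc|exact: hdesc].
Qed.

Lemma stage_outputs : stage_indep (inS D) ->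
  let out (e : edge) (w : Omega) := flow D (fun e' => inp e' w) (fun y => xi y w) e in
  [/\ mutually_independent P (outgoing D) out,
      (forall e, outgoing_asc D e -> has_law P (out e) pi1)
    & (forall e, outgoing_desc D e -> has_law P (out e) pi2)].
Proof.
move=> [indep laws] out.
have output e : outgoing D e -> frontier D (inS D) (inl e) /\ stage_var (inl e) = out e.
  by case=> -[y [Sy ns ->]]; rewrite /= Sy; split => //; apply: funext => w.
split.
- have inl_inj : injective (@inl edge pt) by move=> e e' [].
  apply: mutually_independent_sub (mutually_independent_comp (Dom' := outgoing D) inl_inj indep _) _ _.
  + by move=> e /output [].
  + by [].
  + by move=> e /output [_ <-].
- by move=> e He; have [fe <-] := output e (or_introl He); case: He fe => y [_ _ ->] /laws.
- by move=> e He; have [fe <-] := output e (or_intror He); case: He fe => y [_ _ ->] /laws.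
Qed.

End sweep.

Theorem mainTheorem3 (R : realType) (pi1 pi2 pi3 : probability R R)
  (* Borel probability measures on [0, oo) *)
  (hpi1 : pi1 [set x : R | 0 <= x] = 1%E)
  (hpi2 : pi2 [set x : R | 0 <= x] = 1%E)
  (hpi3 : pi3 [set x : R | 0 <= x] = 1%E)
  (* R mu = mu for mu = pi1 x pi2 x pi3 *)
  (hinv : forall A : set ((R * R) * R), measurable A ->
     (pi1 \x pi2 \x pi3)%E (@Rmap R @^-1` A) = (pi1 \x pi2 \x pi3)%E A)
  (D : hexData) (hD : is_hexagonal D)
  (d : measure_display) (Omega : measurableType d) (P : probability Omega R)
  (inp : edge -> Omega -> R) (xi : pt -> Omega -> R)
  (hasc : forall e, incoming_asc D e -> has_law P (inp e) pi1)
  (hdesc : forall e, incoming_desc D e -> has_law P (inp e) pi2)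
  (hxi : forall y, inS D y -> has_law P (xi y) pi3)
  (hindep : mutually_independent P
     (fun i : edge + pt => match i with inl e => incoming D e | inr y => inS D y end)
     (fun i => match i with inl e => inp e | inr y => xi y end)) :
  let out (e : edge) (w : Omega) := flow D (fun e' => inp e' w) (fun y => xi y w) e in
  [/\ mutually_independent P (outgoing D) out,
      (forall e, outgoing_asc D e -> has_law P (out e) pi1)
    & (forall e, outgoing_desc D e -> has_law P (out e) pi2)].
Proof.
apply: stage_outputs; apply: (stage_indep_full_sweep _ _ _ hinv).
exact: stage_indep_init hasc hdesc hxi hindep.
Qed.
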